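(* Let $\mathsf{C}_B\subset\mathbf{R}^3$ be the cone generated by $x_{+0}=(1,1,0)$, $x_{-0}=(1,-1,0)$, $x_{0+}=(1,0,1)$, $x_{0-}=(1,0,-1)$, and let $\phi=(1,0,0)$ (as a linear form via the standard inner product). Then for every proper cone $\mathsf{C}_A\subset V_A$, $(\mathrm{Id}_{V_A}\otimes\gamma_2^\phi)(\mathsf{C}_A\otimes_{\max}\mathsf{C}_B\otimes_{\max}\mathsf{C}_B)=\mathsf{C}_A\otimes_{\min}\mathsf{C}_B$. More precisely, with $\psi_{\pm\pm}=\frac12(1,\pm1,\pm1)$, for every $y\in\mathbf{R}^3\otimes\mathbf{R}^3$, \[2\gamma_2^\phi(y)=(\psi_{++}\otimes\psi_{+-}+\psi_{+-}\otimes\psi_{++})(y)\,x_{+0}+(\psi_{-+}\otimes\psi_{--}+\psi_{--}\otimes\psi_{-+})(y)\,x_{-0}+(\psi_{++}\otimes\psi_{-+}+\psi_{-+}\otimes\psi_{++})(y)\,x_{0+}+(\psi_{+-}\otimes\psi_{--}+\psi_{--}\otimes\psi_{+-})(y)\,x_{0-}.\]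
   Context: Proper cone: closed convex cone in a finite-dimensional real vector space, containing no line, not contained in a hyperplane; $\mathsf{C}^*$ is its dual cone. $\mathsf{C}_1\otimes_{\min}\mathsf{C}_2=\mathrm{conv}\{x\otimes y:x\in\mathsf{C}_1,y\in\mathsf{C}_2\}$ and $\mathsf{C}_1\otimes_{\max}\mathsf{C}_2=\{z:(f\otimes g)(z)\ge0\ \forall f\in\mathsf{C}_1^*,g\in\mathsf{C}_2^*\}$. $\gamma_2^\phi=\frac12(\mathrm{Id}\otimes\phi+\phi\otimes\mathrm{Id}):\mathbf{R}^3\otimes\mathbf{R}^3\to\mathbf{R}^3$. *)

From HB Require Import structures.
From mathcomp Require Import all_boot all_order all_algebra.
From mathcomp Require Import all_classical all_reals topology normedtype.
Set Implicit Arguments. Unset Strict Implicit. Unset Printing Implicit Defensive.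
Import Order.TTheory GRing.Theory Num.Theory.
Import numFieldNormedType.Exports.
Local Open Scope classical_set_scope.
Local Open Scope ring_scope.

Section Cones.
Variable R : realType.

(* Vectors of R^n are row vectors 'rV[R]_n; linear forms on R^n are given by
   row vectors through the standard inner product. *)
Definition dotv n (f x : 'rV[R]_n) : R := \sum_(i < n) f 0 i * x 0 i.

Definition proper_cone n (C : set 'rV[R]_n) : Prop :=
  [/\ closed C,
      [/\ C 0, (forall x y, C x -> C y -> C (x + y))
         & (forall (a : R) x, 0 <= a -> C x -> C (a *: x))],
      ~ (exists p v : 'rV[R]_n, v != 0 /\ forall t : R, C (p + t *: v))
    &
      (forall (f : 'rV[R]_n) (c : R), f != 0 -> exists x, C x /\ dotv f x != c)].

Definition dual_cone n (C : set 'rV[R]_n) : set 'rV[R]_n :=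
  [set f | forall x, C x -> 0 <= dotv f x].

(* R^n (x) R^m is 'M[R]_(n, m); x (x) y has entries x_i y_j *)
Definition tens n m (x : 'rV[R]_n) (y : 'rV[R]_m) : 'M[R]_(n, m) :=
  \matrix_(i, j) (x 0 i * y 0 j).

Definition tform n m (f : 'rV[R]_n) (g : 'rV[R]_m) (z : 'M[R]_(n, m)) : R :=
  \sum_(i < n) \sum_(j < m) f 0 i * g 0 j * z i j.

Definition tmin n m (C1 : set 'rV[R]_n) (C2 : set 'rV[R]_m) : set 'M[R]_(n, m) :=
  [set z | exists k (lam : 'I_k -> R) (xs : 'I_k -> 'rV[R]_n) (ys : 'I_k -> 'rV[R]_m),
      [/\ (forall i, 0 <= lam i), \sum_(i < k) lam i = 1,
          (forall i, C1 (xs i)), (forall i, C2 (ys i))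
        & z = \sum_(i < k) lam i *: tens (xs i) (ys i)]].

(* R^n (x) R^m (x) R^p as arrays of reals *)
Definition tensor3 n m p := 'I_n -> 'I_m -> 'I_p -> R.

Definition tmax3 n m p (C1 : set 'rV[R]_n) (C2 : set 'rV[R]_m) (C3 : set 'rV[R]_p)
  : set (tensor3 n m p) :=
  [set z | forall f g h, dual_cone C1 f -> dual_cone C2 g -> dual_cone C3 h ->
      0 <= \sum_(i < n) \sum_(j < m) \sum_(l < p) f 0 i * g 0 j * h 0 l * z i j l].

(* gamma_2^phi = 1/2 (Id (x) phi + phi (x) Id) : R^3 (x) R^3 -> R^3 *)
Definition gamma2 (phi : 'rV[R]_3) (y : 'M[R]_3) : 'rV[R]_3 :=
  \row_k (2^-1 * (\sum_(j < 3) y k j * phi 0 j + \sum_(j < 3) phi 0 j * y j k)).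

Definition id_tens_gamma2 n (phi : 'rV[R]_3) (z : tensor3 n 3 3) : 'M[R]_(n, 3) :=
  \matrix_(i, k) gamma2 phi (\matrix_(j, l) z i j l) 0 k.

Definition vec3 (a b c : R) : 'rV[R]_3 :=
  \row_(i < 3) (if val i == 0%N then a else if val i == 1%N then b else c).

Definition xp0 := vec3 1 1 0.
Definition xm0 := vec3 1 (-1) 0.
Definition x0p := vec3 1 0 1.
Definition x0m := vec3 1 0 (-1).
Definition CB : set 'rV[R]_3 :=
  [set v | exists a b c d : R, [/\ 0 <= a, 0 <= b, 0 <= c, 0 <= d &
      v = a *: xp0 + b *: xm0 + c *: x0p + d *: x0m]].
Definition phiB := vec3 1 0 0.
Definition psi (s t : R) := vec3 (2^-1) (2^-1 * s) (2^-1 * t).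

End Cones.

From mathcomp Require Import all_boot all_order all_algebra.
From mathcomp Require Import all_classical all_reals topology normedtype derive.
From mathcomp Require Import ring lra.
Set Implicit Arguments.
Unset Strict Implicit.
Unset Printing Implicit Defensive.

Import Order.TTheory GRing.Theory Num.Theory.
Import numFieldNormedType.Exports.
Local Open Scope classical_set_scope.
Local Open Scope ring_scope.

(* The four psi_{st} (s, t = +-1) lie in the dual of C_B, so contracting z in
   C_A (x)max C_B (x)max C_B with psi (x) psi' gives an element of C_A**, which
   is C_A by the bipolar theorem for closed convex cones (proved with a nearest
   point of C_A).  The decomposition of 2 gamma_2^phi then writes
   (Id (x) gamma_2^phi)(z) as a convex combination of products a (x) x_{+-0},
   a (x) x_{0+-} with a in C_A.  Conversely phi is positive on C_B \ {0} and
   gamma_2^phi (y (x) y) = phi(y) y, so sum_t lam_t x_t (x) y_t is the image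
   of sum_t (lam_t / phi(y_t)) x_t (x) y_t (x) y_t, which lies in the maximal
   tensor product because its pairing with f (x) g (x) h is a nonnegative
   combination of products of nonnegative numbers. *)

Section Bipolar.
Variables (R : realType) (n : nat).
Implicit Types (C : set 'rV[R]_n) (f u v x : 'rV[R]_n).

Lemma dotvDr f x u : dotv f (x + u) = dotv f x + dotv f u.
Proof. by rewrite /dotv -big_split; apply: eq_bigr => i _; rewrite mxE mulrDr. Qed.

Lemma dotvNr f x : dotv f (- x) = - dotv f x.
Proof. by rewrite /dotv -sumrN; apply: eq_bigr => i _; rewrite mxE mulrN. Qed.

Lemma dotvBr f x u : dotv f (x - u) = dotv f x - dotv f u.
Proof. by rewrite dotvDr dotvNr. Qed.

Lemma dotv_ge0 f : 0 <= dotv f f.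
Proof. by apply: sumr_ge0 => i _; rewrite -expr2 sqr_ge0. Qed.

Lemma dotv_eq0 f : (dotv f f == 0) = (f == 0).
Proof.
apply/idP/eqP => [/eqP/psumr_eq0P f0|->]; last by rewrite /dotv big1 // => i; rewrite mxE mul0r.
apply/rowP => i; rewrite mxE; apply/eqP.
by rewrite -sqrf_eq0 expr2 f0 // => j _; rewrite -expr2 sqr_ge0.
Qed.

Definition sqdist v x := dotv (x - v) (x - v).

Lemma sqdist_ge0 v x : 0 <= sqdist v x.
Proof. exact: dotv_ge0. Qed.

Lemma sqdistDr v x u (t : R) :
  sqdist v (x + t *: u) = sqdist v x + 2 * t * dotv (x - v) u + t ^+ 2 * dotv u u.
Proof.
rewrite /sqdist /dotv !mulr_sumr -!big_split; apply: eq_bigr => i _.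
by rewrite !mxE /=; ring.
Qed.

Lemma sqdist_continuous v : continuous (sqdist v).
Proof.
apply: (@continuous_big _ _ +%R 0 xpredT add_continuous) => i _.
have coordB_cont : continuous (fun x : 'rV[R]_n => x 0 i - v 0 i).
  by move=> x; apply: continuousB; [exact: coord_continuous | exact: cst_continuous].
have -> : (fun x => (x - v) 0 i * (x - v) 0 i) =
    (fun x : 'rV[R]_n => x 0 i - v 0 i) \* (fun x : 'rV[R]_n => x 0 i - v 0 i).
  by apply/funext => x; rewrite !mxE.
by move=> x; apply: continuousM; exact: coordB_cont.
Qed.

Lemma sqr_coord_le_sqdist v x i : (x 0 i - v 0 i) ^+ 2 <= sqdist v x.
Proof.
rewrite /sqdist /dotv (bigD1 i) //= !mxE -expr2 lerDl.
by apply: sumr_ge0 => j _; rewrite -expr2 sqr_ge0.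
Qed.

Lemma sqdist_sublevel_bounded v (S : R) : bounded_set [set x | sqdist v x <= S].
Proof.
exists (2 + S + sqdist v 0); split; first by rewrite num_real.
move=> M ltM x /= xS; change (mx_norm x <= M); rewrite mx_normrE.
have S0 : 0 <= S := le_trans (sqdist_ge0 v x) xS.
have T0 := sqdist_ge0 v 0.
apply: bigmax_le; first lra.
move=> [i j] _ /=; rewrite (ord1 i).
have ha : (x 0 j - v 0 j) ^+ 2 <= S := le_trans (sqr_coord_le_sqdist v x j) xS.
have hb := sqr_coord_le_sqdist v 0 j; rewrite mxE sub0r sqrrN in hb.
have -> : x 0 j = (x 0 j - v 0 j) + v 0 j by rewrite subrK.
have norm_le (r : R) : `|r| <= 1 + r ^+ 2.
  by rewrite ler_norml; apply/andP; split; nra.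
apply: le_trans (ler_normD _ _) _.
have := norm_le (x 0 j - v 0 j); have := norm_le (v 0 j); lra.
Qed.

Lemma closed_nearest_point C v x0 : closed C -> C x0 ->
  exists2 p, C p & forall x, C x -> sqdist v p <= sqdist v x.
Proof.
move=> Ccl Cx0; pose K := C `&` [set x | sqdist v x <= sqdist v x0].
have Kcl : closed K.
  apply: closedI => //.
  apply: (@preimage_closed _ _ _ [set r | r <= sqdist v x0]); last exact: closed_le.
  by move=> x _; exact: sqdist_continuous.
have Kc : compact K.
  apply: bounded_closed_compact => //.
  have [M [Mr MK]] := sqdist_sublevel_bounded v (sqdist v x0).
  by exists M; split=> // N /MK NK x [_ /NK].
have [p /set_mem [Cp px0] pmin] :=
  EVT_min_rV (ex_intro _ x0 (conj Cx0 (lexx _))) Kc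
    (continuous_subspaceT (@sqdist_continuous v)).
exists p => // x Cx; have [xx0|/ltW x0x] := leP (sqdist v x) (sqdist v x0).
  by apply: pmin; rewrite inE.
exact: le_trans px0 x0x.
Qed.

Lemma quadratic_ge0_near0 (a b : R) : 0 <= b ->
  (forall t, 0 < t <= 1 -> 0 <= 2 * t * a + t ^+ 2 * b) -> 0 <= a.
Proof.
move=> b0 Hq; rewrite leNgt; apply/negP => a0.
pose t := - a / (b - a).
have tE : t * (b - a) = - a by rewrite /t mulrVK // unitfE; lra.
have t0 : 0 < t by rewrite /t divr_gt0 //; lra.
have := Hq t; rewrite t0 /=; nra.
Qed.

Lemma nearest_point_variational C v p u :
  (forall x, C x -> sqdist v p <= sqdist v x) ->
  (forall t, 0 < t <= 1 -> C (p + t *: u)) -> 0 <= dotv (p - v) u.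
Proof.
move=> pmin Cpu; apply: (quadratic_ge0_near0 (dotv_ge0 u)) => t t01.
by have := pmin _ (Cpu t t01); rewrite sqdistDr -addrA lerDl.
Qed.

Definition convex_cone C :=
  [/\ C 0, (forall x y, C x -> C y -> C (x + y))
     & (forall (a : R) x, 0 <= a -> C x -> C (a *: x))].

Lemma closed_convex_cone_bipolar C : closed C -> convex_cone C ->
  forall v, (forall f, dual_cone C f -> 0 <= dotv f v) -> C v.
Proof.
move=> Ccl [C0 CD CZ] v Hv; apply: contrapT => Cv.
have [p Cp pmin] := closed_nearest_point v Ccl C0.
have pdual : dual_cone C (p - v).
  move=> x Cx; apply: (nearest_point_variational pmin) => t /andP[t0 _].
  by apply: CD => //; apply: CZ => //; exact: ltW.
have p_le0 : dotv (p - v) p <= 0.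
  rewrite -oppr_ge0 -dotvNr; apply: (nearest_point_variational pmin) => t /andP[_ t1].
  by rewrite scalerN -{1}[p]scale1r -scalerBl; apply: CZ; rewrite ?subr_ge0.
have pv_gt0 : 0 < dotv (p - v) (p - v).
  by rewrite lt_def dotv_ge0 dotv_eq0 subr_eq0 andbT; apply: contraPneq Cv => <-.
have pvE : dotv (p - v) v = dotv (p - v) p - dotv (p - v) (p - v).
  by rewrite -dotvBr; congr dotv; rewrite opprB addrC subrK.
have := Hv _ pdual; lra.
Qed.

End Bipolar.

Section Tensors.
Variable R : realType.

Definition slice {n m p} (z : tensor3 R n m p) (i : 'I_n) : 'M[R]_(m, p) :=
  \matrix_(j, l) z i j l.

Lemma dotv_tform_slice n m p (f : 'rV[R]_n) g h (z : tensor3 R n m p) :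
  dotv f (\row_i tform g h (slice z i)) =
  \sum_i \sum_j \sum_l f 0 i * g 0 j * h 0 l * z i j l.
Proof.
apply: eq_bigr => i _; rewrite mxE /tform mulr_sumr; apply: eq_bigr => j _.
by rewrite mulr_sumr; apply: eq_bigr => l _; rewrite mxE !mulrA.
Qed.

Lemma mulr_sum3 n m p (c : R) (F : 'I_n -> R) (G : 'I_m -> R) (H : 'I_p -> R) :
  c * (\sum_i F i) * (\sum_j G j) * (\sum_l H l) =
  \sum_i \sum_j \sum_l c * F i * G j * H l.
Proof.
rewrite [c * _]mulr_sumr big_distrlr big_distrl; apply: eq_bigr => i _.
by rewrite big_distrl; apply: eq_bigr => j _; rewrite /= big_distrr.
Qed.

Lemma tmax3_sum_tens n m p (C1 : set 'rV[R]_n) (C2 : set 'rV[R]_m) (C3 : set 'rV[R]_p)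
    k (c : 'I_k -> R) x y u :
  (forall t, 0 <= c t) -> (forall t, C1 (x t)) -> (forall t, C2 (y t)) ->
  (forall t, C3 (u t)) ->
  tmax3 C1 C2 C3 (fun i j l => \sum_t c t * x t 0 i * y t 0 j * u t 0 l).
Proof.
move=> c0 C1x C2y C3u f g h fd gd hd.
have -> : \sum_i \sum_j \sum_l f 0 i * g 0 j * h 0 l *
            (\sum_t c t * x t 0 i * y t 0 j * u t 0 l) =
          \sum_t c t * dotv f (x t) * dotv g (y t) * dotv h (u t).
  rewrite [RHS](eq_bigr _ (fun t _ => mulr_sum3 (c t) (fun i => f 0 i * x t 0 i)
    (fun j => g 0 j * y t 0 j) (fun l => h 0 l * u t 0 l))).
  rewrite [RHS]exchange_big; apply: eq_bigr => i _ /=.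
  rewrite [RHS]exchange_big; apply: eq_bigr => j _ /=.
  rewrite [RHS]exchange_big; apply: eq_bigr => l _ /=.
  by rewrite mulr_sumr; apply: eq_bigr => t _; ring.
apply: sumr_ge0 => t _; rewrite !mulr_ge0 //; [exact: fd | exact: gd | exact: hd].
Qed.

Lemma tmax3_contract n m p (C1 : set 'rV[R]_n) (C2 : set 'rV[R]_m)
    (C3 : set 'rV[R]_p) z g h :
  closed C1 -> convex_cone C1 -> tmax3 C1 C2 C3 z ->
  dual_cone C2 g -> dual_cone C3 h -> C1 (\row_i tform g h (slice z i)).
Proof.
move=> C1cl C1cone zmax gd hd; apply: closed_convex_cone_bipolar => // f fd.
by rewrite dotv_tform_slice; apply: zmax.
Qed.

End Tensors.

Section ConeB.
Variable R : realType.
Implicit Types y : 'M[R]_3.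

Lemma gamma2_phiBE y k : gamma2 (@phiB R) y 0 k = 2^-1 * (y k 0 + y 0 k).
Proof. by rewrite mxE /phiB !big_ord_recl !big_ord0 !mxE /=; ring. Qed.

Lemma CB_coord0_ge0 (v : 'rV[R]_3) : CB v -> 0 <= v 0 0.
Proof.
by move=> [a [b [c [d [a0 b0 c0 d0 ->]]]]]; rewrite /xp0 /xm0 /x0p /x0m !mxE /=; lra.
Qed.

Lemma CB_coord0_eq0 (v : 'rV[R]_3) : CB v -> v 0 0 = 0 -> v = 0.
Proof.
move=> [a [b [c [d [a0 b0 c0 d0 ->]]]]].
rewrite /xp0 /xm0 /x0p /x0m !mxE /= => abcd0. have [-> -> -> ->] : [/\ a = 0, b = 0, c = 0 & d = 0] by split; lra.
by rewrite !scale0r !addr0.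
Qed.

Lemma psi_dual_CB (s t : R) : (s = 1 \/ s = -1) -> (t = 1 \/ t = -1) ->
  dual_cone (@CB R) (psi s t).
Proof.
move=> s1 t1 _ [a [b [c [d [a0 b0 c0 d0 ->]]]]].
rewrite /dotv /psi /xp0 /xm0 /x0p /x0m !big_ord_recr big_ord0 /= !mxE /=.
by case: s1 => ->; case: t1 => ->; lra.
Qed.

Definition xB : 4.-tuple 'rV[R]_3 := [tuple xp0 R; xm0 R; x0p R; x0m R].
Definition psiL : 4.-tuple 'rV[R]_3 :=
  [tuple psi 1 1; psi (-1) 1; psi 1 1; psi 1 (-1)].
Definition psiR : 4.-tuple 'rV[R]_3 :=
  [tuple psi 1 (-1); psi (-1) (-1); psi (-1) 1; psi (-1) (-1)].

Lemma xB_CB t : @CB R (tnth xB t).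
Proof.
case: t => -[|[|[|[|//]]]] ? /=.
- by exists 1, 0, 0, 0; split => //; rewrite scale1r !scale0r !addr0.
- by exists 0, 1, 0, 0; split => //; rewrite scale1r !scale0r add0r !addr0.
- by exists 0, 0, 1, 0; split => //; rewrite scale1r !scale0r !add0r addr0.
- by exists 0, 0, 0, 1; split => //; rewrite scale1r !scale0r !add0r.
Qed.

Definition symform (g h : 'rV[R]_3) y := tform g h y + tform h g y.

Lemma gamma2_phiB_decomposition y :
  2 *: gamma2 (@phiB R) y =
  \sum_(t < 4) symform (tnth psiL t) (tnth psiR t) y *: tnth xB t.
Proof.
pose yN (a b : nat) := y (inord a) (inord b).
have yE (i j : 'I_3) : y i j = yN i j by rewrite /yN !inord_val.
apply/rowP => k; rewrite summxE !big_ord_recr big_ord0 /= !mxE.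
rewrite /symform /tform /psi /xp0 /xm0 /x0p /x0m !big_ord_recr !big_ord0 /= !mxE /=.
by rewrite !yE; case: k => -[|[|[|//]]] _ /=; field.
Qed.

Lemma psiLR_dual t : dual_cone (@CB R) (tnth psiL t) /\ dual_cone (@CB R) (tnth psiR t).
Proof.
by case: t => -[|[|[|[|//]]]] ?; split; apply: psi_dual_CB; by [left | right].
Qed.

End ConeB.

Section GammaImage.
Variables (R : realType) (n : nat) (CA : set 'rV[R]_n).

Lemma id_tens_gamma2_tmax3_sub : closed CA -> convex_cone CA ->
  id_tens_gamma2 (phiB R) @` tmax3 CA (@CB R) (@CB R) `<=` tmin CA (@CB R).
Proof.
move=> CAcl CAcone w [z zmax <-]; have [_ CAD CAZ] := CAcone.
pose a t : 'rV[R]_n := \row_i symform (tnth (psiL R) t) (tnth (psiR R) t) (slice z i).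
have aCA t : CA (a t).
  have [dL dR] := psiLR_dual R t.
  have -> : a t = \row_i tform (tnth (psiL R) t) (tnth (psiR R) t) (slice z i)
                + \row_i tform (tnth (psiR R) t) (tnth (psiL R) t) (slice z i).
    by apply/rowP => i; rewrite !mxE.
  by apply: CAD; apply: tmax3_contract zmax _ _.
exists 4%N, (fun=> 4^-1), (fun t => 2 *: a t), (tnth (xB R)); split.
- by move=> _; rewrite invr_ge0.
- by rewrite !big_ord_recr big_ord0 /=; field.
- by move=> t; apply: CAZ.
- exact: xB_CB.
apply/matrixP => i k; rewrite summxE mxE.
have := congr1 (fun v : 'rV_3 => v 0 k) (gamma2_phiB_decomposition (slice z i)).
set g := gamma2 _ _; rewrite mxE summxE => dec.
transitivity (2^-1 * \sum_t
    (symform (tnth (psiL R) t) (tnth (psiR R) t) (slice z i) *: tnth (xB R) t) 0 k).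
  by rewrite -dec mulKf ?pnatr_eq0.
by rewrite mulr_sumr; apply: eq_bigr => t _; rewrite !mxE; field.
Qed.

Lemma tmin_sub_id_tens_gamma2_tmax3 :
  tmin CA (@CB R) `<=` id_tens_gamma2 (phiB R) @` tmax3 CA (@CB R) (@CB R).
Proof.
move=> _ [k [lam [xs [ys [lam0 _ CAxs CBys ->]]]]].
pose c t := lam t / ys t 0 0.
exists (fun i j l => \sum_t c t * xs t 0 i * ys t 0 j * ys t 0 l).
  apply: tmax3_sum_tens => // t.
  by apply: divr_ge0 => //; exact: CB_coord0_ge0.
apply/matrixP => i j; rewrite mxE gamma2_phiBE !mxE summxE -big_split mulr_sumr.
apply: eq_bigr => t _; rewrite !mxE /c.
(* If phi(y_t) = 0 then y_t = 0, so the junk value lam_t / 0 is irrelevant. *)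
have [/(CB_coord0_eq0 (CBys t)) ->|ys_nz] := eqVneq (ys t 0 0) 0; first by rewrite !mxE /=; ring.
by rewrite /=; field.
Qed.

End GammaImage.

Theorem mainTheorem15 (R : realType) :
  (forall (n : nat) (CA : set 'rV[R]_n), proper_cone CA ->
     id_tens_gamma2 (@phiB R) @` tmax3 CA (@CB R) (@CB R) = tmin CA (@CB R)) /\
  (forall y : 'M[R]_3,
     2 *: gamma2 (@phiB R) y =
       (tform (psi 1 1) (psi 1 (-1)) y + tform (psi 1 (-1)) (psi 1 1) y) *: @xp0 R
     + (tform (psi (-1) 1) (psi (-1) (-1)) y + tform (psi (-1) (-1)) (psi (-1) 1) y) *: @xm0 R
     + (tform (psi 1 1) (psi (-1) 1) y + tform (psi (-1) 1) (psi 1 1) y) *: @x0p R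
     + (tform (psi 1 (-1)) (psi (-1) (-1)) y + tform (psi (-1) (-1)) (psi 1 (-1)) y) *: @x0m R).
Proof.
split=> [n CA [CAcl CAcone _ _]|y].
  apply/seteqP; split; first exact: id_tens_gamma2_tmax3_sub.
  exact: tmin_sub_id_tens_gamma2_tmax3.
by rewrite gamma2_phiB_decomposition !big_ord_recr big_ord0 /= add0r.
Qed.
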